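(* Suppose that the local ring $(R,\mathfrak m)$ of prime characteristic $p$ is $F$-pure and $F$-finite. Then every $\Phi(E)$-special ideal of $R$ is fully $\Phi(E)$-special.
   Context: $(R,\mathfrak m)$ is a commutative Noetherian local ring of prime characteristic $p$, with Frobenius homomorphism $f(r)=r^p$. $R^{(1)}$ denotes $R$ as a left $R$-module in the usual way and as a right $R$-module via $f$. $R$ is $F$-finite if $R^{(1)}$ is a finitely generated left $R$-module; $R$ is $F$-pure if for every $R$-module $M$ the natural map $M\to R^{(1)}\otimes_R M$, $m\mapsto1\otimes m$, is injective. The Frobenius skew polynomial ring $R[x,f]$ consists of polynomials $\sum_{i=0}^n r_ix^i$, free as a left $R$-module on $(x^i)_{i\ge0}$, with $xr=r^px$; it is graded with $n$th component $Rx^n$. Let $E=E_R(R/\mathfrak m)$, and $\Phi(E)=R[x,f]\otimes_R E=\bigoplus_{n\ge0}Rx^n\otimes_RE$, graded left $R[x,f]$-module with $0$th component identified with $E$. An ideal $\mathfrak a$ is $\Phi(E)$-special if $\mathfrak a=(0:_RN)$ for some $R[x,f]$-submodule $N$ of $\Phi(E)$. $\operatorname{ann}_{\Phi(E)}(\mathfrak aR[x,f])$ is the submodule of elements of $\Phi(E)$ annihilated by all $rx^n$ with $r\in\mathfrak a$, $n\ge0$; $(\cdot)_0$ is its $0$th component. When $R$ is $F$-pure, $\mathfrak a$ is fully $\Phi(E)$-special if $(0:_E\mathfrak a)\subseteq(\operatorname{ann}_{\Phi(E)}(\mathfrak aR[x,f]))_0$. *)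

From HB Require Import structures.
From mathcomp Require Import all_boot all_order all_algebra.
Set Implicit Arguments. Unset Strict Implicit. Unset Printing Implicit Defensive.
Import Order.TTheory GRing.Theory.
Local Open Scope ring_scope.

Section CommAlg.
Variable R : comNzRingType.

Definition is_ideal (I : R -> Prop) : Prop :=
  [/\ I 0, (forall x y, I x -> I y -> I (x + y)) & (forall r x, I x -> I (r * x))].

Definition is_maximal_ideal (I : R -> Prop) : Prop :=
  [/\ is_ideal I, ~ I 1 &
      forall J : R -> Prop, is_ideal J -> (forall x, I x -> J x) -> ~ J 1 ->
        forall x, J x -> I x].

Definition is_local_with (m : R -> Prop) : Prop :=
  is_maximal_ideal m /\
  forall M : R -> Prop, is_maximal_ideal M -> forall x, M x <-> m x.

Definition finitely_generated_ideal (I : R -> Prop) : Prop :=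
  exists (n : nat) (g : 'I_n -> R),
    forall x, I x <-> exists c : 'I_n -> R, x = \sum_(i < n) c i * g i.

Definition noetherian : Prop :=
  forall I : R -> Prop, is_ideal I -> finitely_generated_ideal I.

Definition rlinear (M N : lmodType R) (f : M -> N) : Prop :=
  forall (r : R) (u v : M), f (r *: u + v) = r *: f u + f v.

Definition injective_module (E : lmodType R) : Prop :=
  forall (M N : lmodType R) (i : N -> M) (g : N -> E),
    rlinear i -> injective i -> rlinear g ->
    exists h : M -> E, rlinear h /\ forall v, h (i v) = g v.

(* E is an injective hull E_R(R/m): E is injective and an essential extension
   of a submodule R e0 isomorphic to R/m. *)
Definition injective_hull_residue (m : R -> Prop) (E : lmodType R) : Prop :=
  injective_module E /\
  exists e0 : E,
    (forall r : R, r *: e0 = 0 <-> m r) /\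
    (forall e : E, e <> 0 -> exists r : R, r *: e <> 0 /\ exists s : R, r *: e = s *: e0).

(* Balanced maps R x M -> W where R acts on the right of R through s |-> s^q
   (q = p^n), i.e. the right structure of R x^n. *)
Definition balanced (q : nat) (M : lmodType R) (W : zmodType) (phi : R -> M -> W) : Prop :=
  [/\ (forall r1 r2 v, phi (r1 + r2) v = phi r1 v + phi r2 v),
      (forall r v1 v2, phi r (v1 + v2) = phi r v1 + phi r v2) &
      (forall r s v, phi (r * s ^+ q) v = phi r (s *: v))].

(* The formal sum  \sum_i r_i (x) v_i  is zero in  R^{(q)} (x)_R M
   (tensor product defined by its universal property for balanced maps). *)
Definition tensor_zero (q : nat) (M : lmodType R) (t : seq (R * M)) : Prop :=
  forall (W : zmodType) (phi : R -> M -> W), balanced q phi ->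
    \sum_(u <- t) phi u.1 u.2 = 0.

Definition tensor_eq (q : nat) (M : lmodType R) (t1 t2 : seq (R * M)) : Prop :=
  tensor_zero q (t1 ++ [seq (- u.1, u.2) | u <- t2]).

Definition F_finite (p : nat) : Prop :=
  exists (n : nat) (g : 'I_n -> R),
    forall x : R, exists c : 'I_n -> R, x = \sum_(i < n) g i * c i ^+ p.

(* M -> R^{(1)} (x)_R M, v |-> 1 (x) v, injective for every R-module M *)
Definition F_pure (p : nat) : Prop :=
  forall (M : lmodType R) (v w : M), tensor_eq p [:: (1, v)] [:: (1, w)] -> v = w.

Variables (p : nat) (E : lmodType R).

(* Elements of Phi(E) = \bigoplus_n R x^n (x)_R E, represented by formal sums
   \sum_i r_i x^{n_i} (x) e_i, encoded as seq (n_i, (r_i, e_i)). *)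
Definition phiE := seq (nat * (R * E)).

Definition phi_comp (n : nat) (t : phiE) : seq (R * E) :=
  [seq u.2 | u <- t & u.1 == n].

Definition phi_zero (t : phiE) : Prop :=
  forall n, tensor_zero (p ^ n) (phi_comp n t).

Definition phi_opp (t : phiE) : phiE := [seq (u.1, (- u.2.1, u.2.2)) | u <- t].

Definition phi_eq (t1 t2 : phiE) : Prop := phi_zero (t1 ++ phi_opp t2).

(* left action of r x^k in R[x,f]:  r x^k . (s x^m (x) e) = r s^{p^k} x^{k+m} (x) e *)
Definition phi_act (r : R) (k : nat) (t : phiE) : phiE :=
  [seq (k + u.1, (r * u.2.1 ^+ (p ^ k), u.2.2)) | u <- t].

(* R[x,f]-submodules of Phi(E), as predicates on representatives that are
   invariant under equality in Phi(E). *)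
Definition is_Rxf_submodule (N : phiE -> Prop) : Prop :=
  [/\ (forall t1 t2, N t1 -> phi_eq t1 t2 -> N t2),
      N [::],
      (forall t1 t2, N t1 -> N t2 -> N (t1 ++ t2)) &
      (forall r k t, N t -> N (phi_act r k t))].

Definition annR (N : phiE -> Prop) (r : R) : Prop :=
  forall t, N t -> phi_zero (phi_act r 0 t).

Definition PhiE_special (a : R -> Prop) : Prop :=
  exists N : phiE -> Prop, is_Rxf_submodule N /\ forall r, a r <-> annR N r.

Definition ann_Phi (a : R -> Prop) (t : phiE) : Prop :=
  forall (r : R) (n : nat), a r -> phi_zero (phi_act r n t).

(* (0 :_E a) is contained in the 0th component of ann_{Phi(E)}(a R[x,f]),
   E being identified with R x^0 (x) E via e |-> 1 (x) e. *)
Definition fully_PhiE_special (a : R -> Prop) : Prop :=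
  forall e : E, (forall r, a r -> r *: e = 0) -> ann_Phi a [:: (0%N, (1, e))].

End CommAlg.

From HB Require Import structures.
From mathcomp Require Import all_boot all_order all_algebra.
From mathcomp Require Import boolp.
Import GRing.Theory.
Set Implicit Arguments. Unset Strict Implicit. Unset Printing Implicit Defensive.
Local Open Scope ring_scope.

(* Fix r in a, e in (0 :_E a) and n.  By F-finiteness r = \sum_i g_i d_i^(p^n) for
   generators g_i of F^n_* R, and by Noetherianity the syzygies of the g_i are
   generated by finitely many k_j.  Since a is the annihilator of an
   R[x,f]-submodule, every p^-n-linear map phi sends a into a; and every row lam
   orthogonal to the syzygies defines such a phi with phi(r) = \sum_i lam_i d_i.
   So the linear system \sum_j k_ji w_j = d_i e is compatible, hence solvable in
   the injective module E, and then
   r x^n (x) e = \sum_j (\sum_i g_i k_ji^(p^n)) x^n (x) w_j = 0. *)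

Section Modules.
Variable R : comNzRingType.

Definition submodule_pred (M : lmodType R) (S : M -> Prop) :=
  [/\ S 0, forall x y, S x -> S y -> S (x + y) & forall r x, S x -> S (r *: x)].

Lemma submodule_lincomb (M : lmodType R) (S : M -> Prop) (I : finType)
    (t : I -> R) (v : I -> M) :
  submodule_pred S -> (forall i, S (v i)) -> S (\sum_i t i *: v i).
Proof. by case=> S0 SD SZ Sv; apply: big_ind => // i _; apply: SZ. Qed.

Lemma ffun_lincombE (I J : finType) (t : J -> R) (v : J -> {ffun I -> R^o}) (i : I) :
  (\sum_j t j *: v j) i = \sum_j t j * v j i.
Proof. by rewrite sum_ffunE; apply: eq_bigr => j _; rewrite ffunE. Qed.

Lemma rlinear_lincomb (M N : lmodType R) (f : M -> N) (I : finType)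
    (t : I -> R) (v : I -> M) :
  rlinear f -> f (\sum_i t i *: v i) = \sum_i t i *: f (v i).
Proof.
move=> hf; have f0 : f 0 = 0.
  by have := hf 1 0 0; rewrite !scale1r !addr0 -{1}[f 0]add0r => /addIr/esym.
have fD x y : f (x + y) = f x + f y by rewrite -{1}[x]scale1r hf scale1r.
rewrite (big_morph f fD f0); apply: eq_bigr => i _.
by rewrite -[_ *: v i]addr0 hf f0 addr0.
Qed.

Lemma sum_delta_scale (M : lmodType R) (I : finType) (i : I) (F : I -> M) :
  \sum_j (j == i)%:R *: F j = F i.
Proof.
by rewrite (bigD1 i) //= eqxx scale1r big1 ?addr0 // => j /negbTE ->; rewrite scale0r.
Qed.

Lemma sum_delta_mul (I : finType) (i : I) (F : I -> R) :
  \sum_j (j == i)%:R * F j = F i.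
Proof. exact: (sum_delta_scale (M := R^o)). Qed.

End Modules.

Section Noetherian.
Variables (R : comNzRingType) (hnoeth : noetherian R).

Lemma coordinate_ideal_generators (I : finType) (S : {ffun I -> R^o} -> Prop)
    (i0 : I) :
  submodule_pred S -> exists (n : nat) (cs : 'I_n -> {ffun I -> R^o}),
    (forall k, S (cs k)) /\
    forall c, S c -> exists a : 'I_n -> R, c i0 = \sum_k a k * cs k i0.
Proof.
case=> S0 SD SZ.
pose Si0 x := exists2 c, S c & c i0 = x.
have ideal_Si0 : is_ideal Si0.
  split; first by exists 0; rewrite ?ffunE.
  - by move=> _ _ [c Sc <-] [d Sd <-]; exists (c + d); rewrite ?ffunE //; apply: SD.
  - by move=> r _ [c Sc <-]; exists (r *: c); rewrite ?ffunE //; apply: SZ.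
have [n [gen hgen]] := hnoeth ideal_Si0.
have lift k : exists c, S c /\ c i0 = gen k.
  have [c Sc ci0] : Si0 (gen k).
    by apply/hgen; exists (fun k' => (k' == k)%:R); rewrite sum_delta_mul.
  by exists c.
have [cs hcs] := choice lift.
exists n, cs; split=> [k|c Sc]; first by case: (hcs k).
have [a ->] := (hgen (c i0)).1 (ex_intro2 _ _ c Sc erefl).
by exists a; apply: eq_bigr => k _; case: (hcs k) => _ ->.
Qed.

Lemma noetherian_submodule_on (I : finType) (s : seq I) (S : {ffun I -> R^o} -> Prop) :
  submodule_pred S -> exists (J : finType) (ks : J -> {ffun I -> R^o}),
    (forall j, S (ks j)) /\
    forall c, S c -> exists t : J -> R, {in s, forall i, c i = (\sum_j t j *: ks j) i}.
Proof.
elim: s S => [|i0 s IH] S hS.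
  exists void, (fun v : void => match v with end).
  by split=> [[]|c _]; exists (fun _ => 0).
have [n [cs [Scs hcs]]] := coordinate_ideal_generators i0 hS.
have [S0 SD SZ] := hS.
pose S' c := S c /\ c i0 = 0.
have hS' : submodule_pred S'.
  split; first by split; rewrite ?ffunE.
  - by move=> c d [Sc c0] [Sd d0]; split; [apply: SD | rewrite ffunE c0 d0 addr0].
  - by move=> r c [Sc c0]; split; [apply: SZ | rewrite ffunE c0 scaler0].
have [J [ks [Sks hks]]] := IH S' hS'.
exists ('I_n + J)%type, (fun j => match j with inl k => cs k | inr j' => ks j' end).
split=> [[k|j] //|c Sc]; first by case: (Sks j).
have [a ha] := hcs c Sc.
pose c' := c - \sum_k a k *: cs k.
have Sc' : S' c'.
  split; last by rewrite !ffunE ffun_lincombE ha subrr.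
  by apply: SD => //; rewrite -scaleN1r; apply: SZ; apply: submodule_lincomb.
have [t ht] := hks c' Sc'.
exists (fun j => match j with inl k => a k | inr j' => t j' end).
move=> i; rewrite in_cons ffun_lincombE big_sumType /= -!ffun_lincombE.
case/orP=> [/eqP -> | si]; last by rewrite -ht // /c' !ffunE addrC subrK.
rewrite ha !ffun_lincombE [X in _ + X]big1 ?addr0 // => j _.
by case: (Sks j) => _ ->; rewrite mulr0.
Qed.

Lemma noetherian_submodule_fingen (I : finType) (S : {ffun I -> R^o} -> Prop) :
  submodule_pred S -> exists (J : finType) (ks : J -> {ffun I -> R^o}),
    (forall j, S (ks j)) /\ forall c, S c -> exists t : J -> R, c = \sum_j t j *: ks j.
Proof.
move=> /(noetherian_submodule_on (enum I)) [J [ks [Sks hks]]].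
exists J, ks; split=> // c /hks [t ht].
by exists t; apply/ffunP => i; apply: ht; rewrite mem_enum.
Qed.

End Noetherian.

Section InjectiveLinearSystem.
Variables (R : comNzRingType) (I J : finType) (K : J -> I -> R).

Definition relation_map (lam : I -> R) : {ffun J -> R^o} :=
  [ffun j => \sum_i lam i * K j i].

Definition relation_image : pred {ffun J -> R^o} :=
  fun x => `[< exists lam, x = relation_map lam >].

Lemma relation_image_closed : subsemimod_closed relation_image.
Proof.
split; [split|].
- apply/asboolP; exists (fun _ => 0); apply/ffunP => j.
  by rewrite !ffunE big1 // => i _; rewrite mul0r.
- move=> _ _ /asboolP[a ->] /asboolP[b ->]; apply/asboolP.
  exists (fun i => a i + b i); apply/ffunP => j.
  by rewrite !ffunE -big_split; apply: eq_bigr => i _; rewrite mulrDl.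
- move=> r _ /asboolP[a ->]; apply/asboolP; exists (fun i => r * a i); apply/ffunP => j.
  by rewrite !ffunE scaler_sumr; apply: eq_bigr => i _; exact: mulrA.
Qed.

HB.instance Definition _ :=
  GRing.isSubmodClosed.Build R {ffun J -> R^o} relation_image relation_image_closed.

Definition relation_submodule := {x : {ffun J -> R^o} | relation_image x}.
HB.instance Definition _ := [isSub of relation_submodule for @sval _ relation_image].
HB.instance Definition _ := [Choice of relation_submodule by <:].
HB.instance Definition _ := [SubChoice_isSubLmodule of relation_submodule by <:].

Lemma injective_linear_system (E : lmodType R) (v : I -> E) :
  injective_module E ->
  (forall lam : I -> R, (forall j, \sum_i lam i * K j i = 0) -> \sum_i lam i *: v i = 0) ->
  exists w : J -> E, forall i, v i = \sum_j K j i *: w j.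
Proof.
move=> hE hv.
(* [relation_map lam |-> \sum_i lam i *: v i] is well defined on the image of
   [relation_map]; extend it by injectivity and evaluate at the unit vectors. *)
pose F (lam : I -> R) := \sum_i lam i *: v i.
have F_wd a b : relation_map a = relation_map b -> F a = F b.
  move=> /ffunP hab; apply/eqP; rewrite -subr_eq0 -sumrB; apply/eqP.
  rewrite (eq_bigr (fun i => (a i - b i) *: v i)); last by move=> i _; rewrite scalerBl.
  apply: hv => j; have := hab j; rewrite !ffunE => e.
  rewrite (eq_bigr (fun i => a i * K j i - b i * K j i)); last by move=> i _; rewrite mulrBl.
  by rewrite sumrB e subrr.
have lamof (x : relation_submodule) : {lam | val x = relation_map lam}.
  by apply: cid; apply/asboolP; exact: valP x.
pose g x := F (sval (lamof x)).
have gE x lam : val x = relation_map lam -> g x = F lam.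
  by move=> e; apply: F_wd; rewrite -(svalP (lamof x)).
have g_lin : rlinear g.
  move=> r x y; have [a ha] := lamof x; have [b hb] := lamof y.
  rewrite (gE x a) // (gE y b) // (gE _ (fun i => r * a i + b i)).
    rewrite /F scaler_sumr -big_split; apply: eq_bigr => i _.
    by rewrite scalerDl scalerA.
  rewrite /= ha hb; apply/ffunP => j; rewrite !ffunE scaler_sumr -big_split.
  by apply: eq_bigr => i _; rewrite mulrDl -mulrA.
have [h [h_lin hh]] := hE _ _ val g (fun r x y => erefl) val_inj g_lin.
pose delta (j : J) : {ffun J -> R^o} := [ffun j' => (j' == j)%:R].
exists (fun j => h (delta j)) => i.
pose lam_i i' : R := (i' == i)%:R.
have rel_i : relation_map lam_i = \sum_j K j i *: delta j.
  apply/ffunP => j; rewrite ffunE ffun_lincombE sum_delta_mul.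
  rewrite (eq_bigr (fun j' => (j' == j)%:R * K j' i)) ?sum_delta_mul // => j' _.
  by rewrite ffunE mulrC eq_sym.
have mem_i : relation_image (relation_map lam_i) by apply/asboolP; exists lam_i.
rewrite -(sum_delta_scale i v) -/(F lam_i) -(gE (Sub _ mem_i) lam_i) //.
by rewrite -hh /= rel_i rlinear_lincomb.
Qed.

End InjectiveLinearSystem.

Section Frobenius.
Variables (R : comNzRingType) (p : nat) (hchar : p \in [pchar R]).

Lemma frobeniusD n (x y : R) : (x + y) ^+ (p ^ n) = x ^+ (p ^ n) + y ^+ (p ^ n).
Proof. by apply: exprDn_pchar; rewrite pnatX pnatE ?hchar ?(pcharf_prime hchar). Qed.

Lemma frobenius0 n : (0 : R) ^+ (p ^ n) = 0.
Proof. by rewrite expr0n expn_eq0 eqn0Ngt prime_gt0 ?(pcharf_prime hchar). Qed.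

Lemma frobeniusB n (x y : R) : (x - y) ^+ (p ^ n) = x ^+ (p ^ n) - y ^+ (p ^ n).
Proof. by apply: (addIr (y ^+ (p ^ n))); rewrite -frobeniusD !subrK. Qed.

Lemma frobenius_sum n (I : finType) (F : I -> R) :
  (\sum_i F i) ^+ (p ^ n) = \sum_i F i ^+ (p ^ n).
Proof. exact: (big_morph _ (frobeniusD n) (frobenius0 n)). Qed.

(* [g] generates the Frobenius pushforward [F^n_* R] as an [R]-module. *)
Definition frobenius_generating n (I : finType) (g : I -> R) :=
  forall x, exists c : {ffun I -> R^o}, x = \sum_i g i * c i ^+ (p ^ n).

Lemma frobenius_generatingS n (I J : finType) (g : I -> R) (g0 : J -> R) :
  frobenius_generating n g -> frobenius_generating 1 g0 ->
  frobenius_generating n.+1 (fun ij : I * J => g ij.1 * g0 ij.2 ^+ (p ^ n)).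
Proof.
move=> hg hg0 x; have [c ->] := hg x.
have [d hd] := choice (fun i => hg0 (c i)).
exists [ffun ij : I * J => d ij.1 ij.2].
under [RHS]eq_bigr do rewrite ffunE.
rewrite -(pair_bigA _ (fun i j => g i * g0 j ^+ (p ^ n) * d i j ^+ (p ^ n.+1))).
apply: eq_bigr => i _.
rewrite hd frobenius_sum mulr_sumr; apply: eq_bigr => j _.
by rewrite exprMn -exprM -expnD add1n mulrA.
Qed.

Lemma F_finite_frobenius_generating n :
  F_finite R p -> exists (I : finType) (g : I -> R), frobenius_generating n g.
Proof.
move=> [m [g0 hg0]]; elim: n => [|n [I [g hg]]].
  exists 'I_1, (fun _ => 1) => x; exists [ffun => x].
  by rewrite big_ord1 ffunE expn0 expr1 mul1r.
exists (I * 'I_m)%type, (fun ij => g ij.1 * g0 ij.2 ^+ (p ^ n)).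
apply: frobenius_generatingS hg _ => x; have [c ->] := hg0 x.
by exists [ffun i => c i]; apply: eq_bigr => i _; rewrite ffunE expn1.
Qed.

Definition frobenius_syzygy n (I : finType) (g : I -> R) (c : {ffun I -> R^o}) :=
  \sum_i g i * c i ^+ (p ^ n) = 0.

Lemma frobenius_syzygy_submodule n (I : finType) (g : I -> R) :
  submodule_pred (frobenius_syzygy n g).
Proof.
rewrite /frobenius_syzygy; split.
- by rewrite big1 // => i _; rewrite ffunE frobenius0 mulr0.
- move=> c d hc hd.
  rewrite (eq_bigr (fun i => g i * c i ^+ (p ^ n) + g i * d i ^+ (p ^ n))).
    by rewrite big_split /= hc hd addr0.
  by move=> i _; rewrite ffunE frobeniusD mulrDr.
- move=> r c hc.
  rewrite (eq_bigr (fun i => r ^+ (p ^ n) * (g i * c i ^+ (p ^ n)))).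
    by rewrite -mulr_sumr hc mulr0.
  by move=> i _; rewrite ffunE exprMn mulrCA.
Qed.

(* [phi] is an element of [Hom_R(F^n_* R, R)], i.e. a [p^-n]-linear map. *)
Definition inv_frobenius_linear n (phi : R -> R) :=
  (forall x y, phi (x + y) = phi x + phi y) /\
  (forall u s, phi (u * s ^+ (p ^ n)) = s * phi u).

Lemma inv_frobenius_linear_of_syzygy_orth n (I : finType) (g : I -> R)
    (lam : I -> R) :
  frobenius_generating n g ->
  (forall c, frobenius_syzygy n g c -> \sum_i lam i * c i = 0) ->
  exists phi, inv_frobenius_linear n phi /\
    forall c : {ffun I -> R^o}, phi (\sum_i g i * c i ^+ (p ^ n)) = \sum_i lam i * c i.
Proof.
move=> hg horth; have [d hd] := choice hg.
pose phi x := \sum_i lam i * d x i.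
have phiE (c : {ffun I -> R^o}) : phi (\sum_i g i * c i ^+ (p ^ n)) = \sum_i lam i * c i.
  set x := \sum_i _; apply/eqP; rewrite -subr_eq0 -sumrB; apply/eqP.
  rewrite (eq_bigr (fun i => lam i * (d x - c) i)); last first.
    by move=> i _; rewrite !ffunE mulrBr.
  apply: horth; rewrite /frobenius_syzygy.
  rewrite (eq_bigr (fun i => g i * d x i ^+ (p ^ n) - g i * c i ^+ (p ^ n))).
    by rewrite sumrB -hd subrr.
  by move=> i _; rewrite !ffunE frobeniusB mulrBr.
exists phi; split; [split|] => // [x y|u s].
- rewrite {1}(hd x) {1}(hd y) -big_split.
  rewrite (eq_bigr (fun i => g i * (d x + d y) i ^+ (p ^ n))); last first.
    by move=> i _; rewrite ffunE frobeniusD mulrDr.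
  by rewrite phiE -big_split; apply: eq_bigr => i _; rewrite ffunE mulrDr.
- rewrite {1}(hd u) mulr_suml.
  rewrite (eq_bigr (fun i => g i * [ffun i => (d u i : R) * s] i ^+ (p ^ n))); last first.
    by move=> i _; rewrite ffunE exprMn mulrA.
  by rewrite phiE mulr_sumr; apply: eq_bigr => i _; rewrite ffunE mulrA mulrC.
Qed.

End Frobenius.

Section Balanced.
Variables (R : comNzRingType) (M : lmodType R) (W : zmodType) (q : nat).
Variables (psi : R -> M -> W) (hpsi : balanced q psi).

Lemma balanced0l v : psi 0 v = 0.
Proof. by case: hpsi => psiD _ _; apply: (addIr (psi 0 v)); rewrite -psiD !add0r. Qed.

Lemma balanced0r r : psi r 0 = 0.
Proof. by case: hpsi => _ psiD _; apply: (addIr (psi r 0)); rewrite -psiD !add0r. Qed.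

Lemma balanced_suml (I : finType) (F : I -> R) v :
  psi (\sum_i F i) v = \sum_i psi (F i) v.
Proof.
by case: hpsi => psiD _ _; exact: (big_morph (psi^~ v) (fun x y => psiD x y v) (balanced0l v)).
Qed.

Lemma balanced_sumr (I : finType) r (F : I -> M) :
  psi r (\sum_i F i) = \sum_i psi r (F i).
Proof. by case: hpsi => _ psiD _; exact: (big_morph (psi r) (psiD r) (balanced0r r)). Qed.

Lemma balanced_lincomb (I : finType) (g c : I -> R) v :
  psi (\sum_i g i * c i ^+ q) v = \sum_i psi (g i) (c i *: v).
Proof.
by case: (hpsi) => _ _ psiZ; rewrite balanced_suml; apply: eq_bigr => i _.
Qed.

End Balanced.

Section FrobeniusTensor.
Variables (R : comNzRingType) (p : nat) (hchar : p \in [pchar R]).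
Variables (hnoeth : noetherian R) (hFfin : F_finite R p).

(* Over an injective [E], [F^n_* R (x) E] is dual to [Hom_R(F^n_* R, R)]. *)
Lemma tensor_zero_of_inv_frobenius_linear (E : lmodType R) n r (e : E) :
  injective_module E ->
  (forall phi, inv_frobenius_linear p n phi -> phi r *: e = 0) ->
  tensor_zero (p ^ n) [:: (r, e)].
Proof.
move=> hE he.
have [I [g hg]] := F_finite_frobenius_generating hchar n hFfin.
have [J [ks [syz_ks gen_ks]]] :=
  noetherian_submodule_fingen hnoeth (frobenius_syzygy_submodule hchar n g).
have [d hr] := hg r.
have compat (lam : I -> R) :
    (forall j, \sum_i lam i * ks j i = 0) -> \sum_i lam i *: ((d i : R) *: e) = 0.
  move=> hlam.
  have orth c : frobenius_syzygy p n g c -> \sum_i lam i * c i = 0.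
    move=> /gen_ks [t ->]; under eq_bigr do rewrite ffun_lincombE mulr_sumr.
    rewrite exchange_big big1 //= => j _.
    rewrite (eq_bigr (fun i => t j * (lam i * ks j i))); last by move=> i _; rewrite mulrCA.
    by rewrite -mulr_sumr hlam mulr0.
  have [phi [hphi phiE]] := inv_frobenius_linear_of_syzygy_orth hchar hg orth.
  have := he phi hphi; rewrite hr phiE scaler_suml.
  by under eq_bigr do rewrite -scalerA.
have [w hw] := injective_linear_system hE compat.
move=> W psi hpsi; rewrite big_seq1 /= hr (balanced_lincomb hpsi).
under eq_bigr do rewrite hw (balanced_sumr hpsi).
rewrite exchange_big big1 //= => j _.
by rewrite -(balanced_lincomb hpsi) syz_ks (balanced0l hpsi).
Qed.

End FrobeniusTensor.

Section PhiE.
Variables (R : comNzRingType) (p : nat) (E : lmodType R).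

Lemma phi_comp_act0 (r : R) k (t : phiE E) :
  phi_comp k (phi_act p r 0 t) = [seq (r * u.1, u.2) | u <- phi_comp k t].
Proof.
rewrite /phi_comp /phi_act filter_map -!map_comp.
by rewrite (@eq_filter _ _ (fun u => u.1 == k)).
Qed.

Lemma phi_comp_act_shift (r : R) n k (t : phiE E) :
  phi_comp (n + k) (phi_act p r 0 (phi_act p 1 n t)) =
  [seq (r * u.1 ^+ (p ^ n), u.2) | u <- phi_comp k t].
Proof.
rewrite phi_comp_act0 /phi_comp /phi_act filter_map -!map_comp.
rewrite (@eq_filter _ _ (fun u => u.1 == k)) => [|u] /=; last by rewrite eqn_add2l.
by apply: eq_map => u /=; rewrite mul1r.
Qed.

(* Move [t] to degree [n + k] with [x^n]; composing with [phi] turns balanced maps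
   of degree [k] into balanced maps of degree [n + k]. *)
Lemma annR_inv_frobenius_linear (N : phiE E -> Prop) n (phi : R -> R) r :
  is_Rxf_submodule p N -> inv_frobenius_linear p n phi ->
  annR p N r -> annR p N (phi r).
Proof.
case=> _ _ _ N_act [phiD phiZ] hr t Nt k W psi [psiDl psiDr psiZ].
have bal : balanced (p ^ (n + k)) (fun u => psi (phi u)).
  split=> [r1 r2 v|//|r1 s v]; first by rewrite phiD psiDl.
  by rewrite expnD mulnC exprM phiZ mulrC psiZ.
have := hr _ (N_act 1 n t Nt) (n + k)%N W _ bal.
rewrite phi_comp_act_shift phi_comp_act0 !big_map => /(etrans _); apply.
by apply: eq_bigr => u _ /=; rewrite phiZ mulrC.
Qed.

Lemma phi_zero_monomial n (r : R) (e : E) :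
  tensor_zero (p ^ n) [:: (r, e)] -> phi_zero p (phi_act p r n [:: (0%N, (1, e))]).
Proof.
move=> hre k; rewrite /phi_comp /= addr0 expr1n mulr1.
by case: eqP => [<- //|_ W psi _]; rewrite big_nil.
Qed.

End PhiE.

Theorem theorem3p4 (R : comNzRingType) (p : nat) (m : R -> Prop) (E : lmodType R)
  (hp : prime p) (hchar : p \in [pchar R])
  (hnoeth : noetherian R) (hlocal : is_local_with m)
  (hE : injective_hull_residue m E)
  (hFfin : F_finite R p) (hFpure : F_pure R p) :
  forall a : R -> Prop, PhiE_special p E a -> fully_PhiE_special p E a.
Proof.
move=> a [N [hN ha]] e he r n ar; apply: phi_zero_monomial.
apply: (tensor_zero_of_inv_frobenius_linear hchar hnoeth hFfin hE.1) => phi hphi.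
by apply/he/ha; apply: (annR_inv_frobenius_linear hN hphi); apply/ha.
Qed.
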